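(* Consider a $K$-armed bandit ($K\ge2$) with reward vector $r\in[0,1]^K$ having distinct entries, and let $\pi^*$ be the one-hot policy on the optimal arm. For any temperature $\eta\in(0,\infty)$, the discrete DG update $\theta_{t+1}(a)=\theta_t(a)+\alpha\,w_t(a)U_t(a)$ with sufficiently small step size $\alpha>0$ yields policies $\pi_{\theta_t}$ converging to $\pi^*$.
   Context: Softmax policy $\pi_\theta(a)=e^{\theta(a)}/\sum_{a'}e^{\theta(a')}$; $\pi_t=\pi_{\theta_t}$. $U_t(a):=r(a)-\pi_t^\top r$, $\ell_t(a):=-\log\pi_t(a)$, and $w_t(a):=\sigma(U_t(a)\ell_t(a)/\eta)$ with $\sigma(x)=1/(1+e^{-x})$. Equivalently $\pi_{t+1}(a)=\pi_t(a)e^{\alpha w_t(a)U_t(a)}/\sum_{a'}\pi_t(a')e^{\alpha w_t(a')U_t(a')}$. *)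

From HB Require Import structures.
From mathcomp Require Import all_boot all_order all_algebra.
From mathcomp Require Import all_classical all_reals all_analysis.
Set Implicit Arguments. Unset Strict Implicit. Unset Printing Implicit Defensive.
Import Order.TTheory GRing.Theory Num.Theory.
Local Open Scope ring_scope.

Section DG.
Variables (R : realType) (K : nat).

Definition softmax (theta : 'I_K -> R) (a : 'I_K) : R :=
  expR (theta a) / \sum_(b < K) expR (theta b).

Definition advU (r theta : 'I_K -> R) (a : 'I_K) : R :=
  r a - \sum_(b < K) softmax theta b * r b.

Definition ellL (theta : 'I_K -> R) (a : 'I_K) : R := - ln (softmax theta a).

Definition sigmoid (x : R) : R := 1 / (1 + expR (- x)).

Definition wgt (eta : R) (r theta : 'I_K -> R) (a : 'I_K) : R :=
  sigmoid (advU r theta a * ellL theta a / eta).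

Definition DG_step (eta alpha : R) (r theta : 'I_K -> R) : 'I_K -> R :=
  fun a => theta a + alpha * wgt eta r theta a * advU r theta a.

Definition DG_iter (eta alpha : R) (r theta0 : 'I_K -> R) (t : nat) : 'I_K -> R :=
  iter t (DG_step eta alpha r) theta0.

End DG.

From HB Require Import structures.
From mathcomp Require Import all_boot all_order all_algebra.
From mathcomp Require Import all_classical all_reals all_analysis.
From mathcomp Require Import ring lra.
Import Order.TTheory GRing.Theory Num.Theory numFieldNormedType.Exports.
Local Open Scope classical_set_scope.
Local Open Scope ring_scope.
Set Implicit Arguments. Unset Strict Implicit.

(* The expected reward J_t = pi_t . r never decreases, whatever the step
   size alpha > 0: J_{t+1} - J_t is a positive multiple of
   sum_a pi_t(a) (exp(alpha w_t(a) U_t(a)) - 1) U_t(a), a sum of nonnegative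
   terms.  Bounded by r(astar), J_t converges to some L, and its increments,
   which dominate pi_t(b) U_t(b)^2 whenever U_t(b) >= 0, tend to 0; hence
   pi_t(b) -> 0 for every arm with r(b) > L.  If L < r(astar), then
   pi_t(astar) -> 0 too, while every arm with r(b) <= L eventually has
   U_t(b) <= U_t(astar)/2, so (as 0 < w_t <= 1 and w_t(astar) >= 1/2) its
   logit grows more slowly than that of astar and pi_t(b)/pi_t(astar) stays
   bounded: all the mass would vanish.  So L = r(astar), and
   pi_t(b) (r(astar) - r(b)) <= r(astar) - J_t gives pi_t(b) -> 0 for
   b <> astar.  Any alpha > 0 works. *)

Section sigmoid.
Variable R : realType.
Implicit Types x : R.

Lemma sigmoid_gt0 x : 0 < sigmoid x.
Proof. by rewrite /sigmoid divr_gt0 // addr_gt0 ?expR_gt0. Qed.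

Lemma sigmoid_le1 x : sigmoid x <= 1.
Proof.
by rewrite /sigmoid ler_pdivrMr ?mul1r ?lerDl ?expR_ge0 // addr_gt0 ?expR_gt0.
Qed.

Lemma sigmoid_ge_half x : 0 <= x -> 2^-1 <= sigmoid x.
Proof.
move=> x_ge0; rewrite /sigmoid ler_pdivlMr ?addr_gt0 ?expR_gt0 //.
have : expR (- x) <= 1 by rewrite expR_le1 oppr_le0.
lra.
Qed.

End sigmoid.

Lemma expR_subr1_mul_ge0 (R : realType) (c x : R) :
  0 <= c -> 0 <= (expR (c * x) - 1) * x.
Proof.
move=> c_ge0; have [x_ge0|x_lt0] := leP 0 x.
  by rewrite mulr_ge0 // subr_ge0 -expR0 ler_expR mulr_ge0.
apply: mulr_le0; last exact: ltW.
by rewrite subr_le0 expR_le1; apply: mulr_ge0_le0 c_ge0 (ltW x_lt0).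
Qed.

Section filter_squeeze.
Context {T : Type} {F : set_system T} {FF : Filter F} {R : realFieldType}.

Lemma squeeze_cvg0 (u v : T -> R) (c : R) :
  (\forall x \near F, 0 <= u x <= c * v x) -> v @ F --> 0 -> u @ F --> 0.
Proof.
move=> uv v0; apply: squeeze_cvgr uv _ (cvg_cst 0) _.
by rewrite -(mulr0 c); apply: cvgMl_tmp.
Qed.

End filter_squeeze.

Section softmax.
Variables (R : realType) (K : nat).
Implicit Types (r theta : 'I_K -> R) (a b astar : 'I_K) (c : R).

(* In the lemmas below, an arm [a] not occurring in the conclusion only
   witnesses that ['I_K] is inhabited. *)

Definition normalizer theta := \sum_b expR (theta b).

Definition expected_reward r theta := \sum_b softmax theta b * r b.

Lemma normalizer_gt0 theta a : 0 < normalizer theta.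
Proof.
rewrite /normalizer (bigD1 a) //= ltr_pwDl ?expR_gt0 //.
by rewrite sumr_ge0 // => b _; rewrite expR_ge0.
Qed.

Lemma softmax_gt0 theta a : 0 < softmax theta a.
Proof. by rewrite divr_gt0 ?expR_gt0 // (normalizer_gt0 theta a). Qed.

Lemma softmax_ge0 theta a : 0 <= softmax theta a.
Proof. exact/ltW/softmax_gt0. Qed.

Lemma sum_softmax theta a : \sum_b softmax theta b = 1.
Proof. by rewrite -mulr_suml divff // gt_eqF // (normalizer_gt0 theta a). Qed.

Lemma softmax_le1 theta a : softmax theta a <= 1.
Proof.
rewrite -(sum_softmax theta a) (bigD1 a) //= lerDl.
by rewrite sumr_ge0 // => b _; apply: softmax_ge0.
Qed.

Lemma softmax_ratio theta a b :
  softmax theta b = expR (theta b - theta a) * softmax theta a.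
Proof. by rewrite /softmax mulrA -expRD subrK. Qed.

Lemma ellL_ge0 theta a : 0 <= ellL theta a.
Proof. by rewrite oppr_ge0 ln_le0 // softmax_le1. Qed.

Lemma sum_softmax_mulr theta c a : \sum_b softmax theta b * c = c.
Proof. by rewrite -mulr_suml (sum_softmax theta a) mul1r. Qed.

Lemma sum_softmax_advU r theta a : \sum_b softmax theta b * advU r theta b = 0.
Proof.
rewrite /advU; under eq_bigr do rewrite mulrBr.
by rewrite sumrB (sum_softmax_mulr _ _ a) subrr.
Qed.

Lemma expected_reward_ge0 r theta : (forall b, 0 <= r b) -> 0 <= expected_reward r theta.
Proof. by move=> r_ge0; rewrite sumr_ge0 // => b _; rewrite mulr_ge0 ?softmax_ge0. Qed.

Lemma expected_reward_le r theta c a :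
  (forall b, r b <= c) -> expected_reward r theta <= c.
Proof.
move=> r_le; rewrite -[c]mul1r -(sum_softmax theta a) mulr_suml.
by apply: ler_sum => b _; rewrite ler_wpM2l ?softmax_ge0.
Qed.

Lemma softmax_mul_gap_le r theta astar b :
  (forall a, r a <= r astar) ->
  softmax theta b * (r astar - r b) <= r astar - expected_reward r theta.
Proof.
move=> r_le.
have -> : r astar - expected_reward r theta =
    \sum_c softmax theta c * (r astar - r c).
  under eq_bigr do rewrite mulrBr.
  by rewrite sumrB (sum_softmax_mulr _ _ b).
rewrite (bigD1 b) //= lerDl sumr_ge0 // => c _.
by rewrite mulr_ge0 ?softmax_ge0 ?subr_ge0.
Qed.

End softmax.

Section DG_step.
Variables (R : realType) (K : nat) (eta alpha : R) (r : 'I_K -> R).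
Hypotheses (r01 : forall a, 0 <= r a <= 1) (eta_gt0 : 0 < eta) (alpha_gt0 : 0 < alpha).
Implicit Types (theta : 'I_K -> R) (a b : 'I_K).

Definition DG_incr theta a := alpha * wgt eta r theta a * advU r theta a.

Local Notation step := (DG_step eta alpha r).

Lemma advU_le1 theta a : advU r theta a <= 1.
Proof.
have J_ge0 : 0 <= expected_reward r theta.
  by apply: expected_reward_ge0 => b; case/andP: (r01 b).
by case/andP: (r01 a) => _; rewrite /advU -/(expected_reward r theta); lra.
Qed.

Lemma wgt_ge_half theta a : 0 <= advU r theta a -> 2^-1 <= wgt eta r theta a.
Proof.
move=> U_ge0; apply: sigmoid_ge_half.
by rewrite divr_ge0 ?mulr_ge0 ?ellL_ge0 // ltW.
Qed.

Lemma DG_incr_le theta a : DG_incr theta a <= alpha.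
Proof.
rewrite /DG_incr -mulrA -[X in _ <= X]mulr1 ler_wpM2l ?(ltW alpha_gt0) //.
have := sigmoid_gt0 (advU r theta a * ellL theta a / eta).
have := sigmoid_le1 (advU r theta a * ellL theta a / eta).
have := advU_le1 theta a.
rewrite /wgt; set w := sigmoid _; set U := advU r theta a.
nra.
Qed.

Lemma DG_incr_le_half theta a b :
    0 <= advU r theta a -> advU r theta b <= advU r theta a / 2 ->
  DG_incr theta b <= DG_incr theta a.
Proof.
move=> Ua_ge0 Ub_le; rewrite /DG_incr -(mulrA alpha) -(mulrA alpha) ler_pM2l //.
have := wgt_ge_half Ua_ge0.
have := sigmoid_gt0 (advU r theta b * ellL theta b / eta).
have := sigmoid_le1 (advU r theta b * ellL theta b / eta).
rewrite /wgt; set wa := sigmoid (advU r theta a * _ / _); set wb := sigmoid _.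
move: Ua_ge0 Ub_le; set Ua := advU r theta a; set Ub := advU r theta b.
have [Ub_ge0|Ub_lt0] := leP 0 Ub; nra.
Qed.

Lemma softmax_DG_step theta a :
  softmax (step theta) a =
  softmax theta a * expR (DG_incr theta a) * (normalizer theta / normalizer (step theta)).
Proof.
have Z_gt0 := normalizer_gt0 theta a; have Z'_gt0 := normalizer_gt0 (step theta) a.
rewrite /softmax -!/(normalizer _) {1}/DG_step expRD -/(DG_incr theta a).
by field; rewrite !gt_eqF.
Qed.

Lemma normalizer_DG_step_ratio_ge theta a :
  expR (- alpha) <= normalizer theta / normalizer (step theta).
Proof.
rewrite ler_pdivlMr ?(normalizer_gt0 _ a) // /normalizer mulr_sumr.
apply: ler_sum => b _; rewrite /DG_step -/(DG_incr theta b) -expRD ler_expR.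
by have := DG_incr_le theta b; lra.
Qed.

Lemma expected_reward_DG_step theta a :
  expected_reward r (step theta) - expected_reward r theta =
  normalizer theta / normalizer (step theta) *
  \sum_b softmax theta b * ((expR (DG_incr theta b) - 1) * advU r theta b).
Proof.
have -> : expected_reward r (step theta) - expected_reward r theta =
    \sum_b softmax (step theta) b * advU r theta b.
  rewrite /advU; under [RHS]eq_bigr do rewrite mulrBr.
  by rewrite sumrB (sum_softmax_mulr _ _ a).
have -> : \sum_b softmax theta b * ((expR (DG_incr theta b) - 1) * advU r theta b) =
    \sum_b softmax theta b * expR (DG_incr theta b) * advU r theta b.
  rewrite -[RHS]subr0 -[X in _ - X](sum_softmax_advU r theta a) -sumrB.
  by apply: eq_bigr => b _; ring.
by rewrite mulr_sumr; apply: eq_bigr => b _; rewrite softmax_DG_step; ring.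
Qed.

Lemma DG_gain_ge0 theta a : 0 <= (expR (DG_incr theta a) - 1) * advU r theta a.
Proof.
rewrite /DG_incr; apply: expR_subr1_mul_ge0.
by rewrite mulr_ge0 ?ltW ?sigmoid_gt0.
Qed.

Lemma DG_gain_ge theta a : 0 <= advU r theta a ->
  alpha / 2 * advU r theta a ^+ 2 <= (expR (DG_incr theta a) - 1) * advU r theta a.
Proof.
move=> U_ge0; apply: le_trans (_ : DG_incr theta a * advU r theta a <= _).
  have := wgt_ge_half U_ge0; rewrite /DG_incr.
  have : 0 <= alpha * advU r theta a ^+ 2 by rewrite mulr_ge0 ?sqr_ge0 ?ltW.
  set w := wgt eta r theta a; set U := advU r theta a.
  rewrite expr2; nra.
by rewrite ler_wpM2r //; have := expR_ge1Dx (DG_incr theta a); lra.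
Qed.

Lemma expected_reward_DG_step_ge theta a :
  expected_reward r theta <= expected_reward r (step theta).
Proof.
rewrite -subr_ge0 (expected_reward_DG_step _ a) mulr_ge0 //.
  by rewrite ltW // divr_gt0 ?(normalizer_gt0 _ a).
by rewrite sumr_ge0 // => b _; rewrite mulr_ge0 ?softmax_ge0 ?DG_gain_ge0.
Qed.

Lemma expected_reward_DG_step_gain theta a : 0 <= advU r theta a ->
  expR (- alpha) * (alpha / 2) * (softmax theta a * advU r theta a ^+ 2)
    <= expected_reward r (step theta) - expected_reward r theta.
Proof.
move=> U_ge0; rewrite (expected_reward_DG_step _ a) -mulrA.
apply: ler_pM; rewrite ?expR_ge0 ?(normalizer_DG_step_ratio_ge _ a) //.
  apply: mulr_ge0; first by rewrite divr_ge0 ?ltW.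
  by rewrite mulr_ge0 ?softmax_ge0 ?sqr_ge0.
rewrite (bigD1 a) //= -[X in X <= _]addr0 lerD //; last first.
  by rewrite sumr_ge0 // => b _; rewrite mulr_ge0 ?softmax_ge0 ?DG_gain_ge0.
by rewrite mulrCA ler_wpM2l ?softmax_ge0 ?DG_gain_ge.
Qed.

End DG_step.

Section DG_convergence.
Variables (R : realType) (K : nat) (r : 'I_K -> R) (astar : 'I_K).
Variables (eta alpha : R) (theta0 : 'I_K -> R).
Hypotheses (r01 : forall a, 0 <= r a <= 1)
  (r_lt_opt : forall b, b != astar -> r b < r astar)
  (eta_gt0 : 0 < eta) (alpha_gt0 : 0 < alpha).
Implicit Types (a b : 'I_K) (t : nat).

Let theta := DG_iter eta alpha r theta0.
Let J t := expected_reward r (theta t).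
Let L := limn J.

Let advUE t b : advU r (theta t) b = r b - J t.
Proof. by []. Qed.

Let r_le_opt b : r b <= r astar.
Proof. by have [->|/r_lt_opt/ltW] := eqVneq b astar. Qed.

Let J_le_opt t : J t <= r astar.
Proof. exact: expected_reward_le astar r_le_opt. Qed.

Let J_nondecreasing : nondecreasing_seq J.
Proof. by apply/nondecreasing_seqP => t; apply: expected_reward_DG_step_ge astar. Qed.

Let J_cvg : J @ \oo --> L.
Proof.
apply: nondecreasing_is_cvgn J_nondecreasing _.
by exists (r astar) => _ [t _ <-]; apply: J_le_opt.
Qed.

Let J_le_lim t : J t <= L.
Proof. exact: nondecreasing_cvgn_le J_nondecreasing J_cvg t. Qed.

Let lim_le_opt : L <= r astar.
Proof. by apply: limr_le J_cvg _; apply: nearW J_le_opt. Qed.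

Let J_increment_cvg0 : (fun t => J t.+1 - J t) @ \oo --> 0.
Proof.
rewrite -(subrr L); apply: cvgB J_cvg.
by rewrite (cvg_shiftS J).
Qed.

Let softmax_cvg0_above b : L < r b -> (fun t => softmax (theta t) b) @ \oo --> 0.
Proof.
move=> L_lt_rb.
pose C := expR (- alpha) * (alpha / 2) * (r b - L) ^+ 2.
have C_gt0 : 0 < C by rewrite !mulr_gt0 ?expR_gt0 ?exprn_gt0 ?subr_gt0.
apply: (squeeze_cvg0 (c := C^-1)) J_increment_cvg0.
apply: nearW => t; rewrite softmax_ge0 ler_pdivlMl //=.
have U_ge : r b - L <= advU r (theta t) b by rewrite advUE lerB ?J_le_lim.
have U_ge0 : 0 <= advU r (theta t) b by rewrite (le_trans _ U_ge) // subr_ge0 ltW.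
apply: le_trans (expected_reward_DG_step_gain r01 eta_gt0 alpha_gt0 U_ge0).
rewrite /C -(mulrA (expR (- alpha) * (alpha / 2))).
rewrite ler_wpM2l ?mulr_ge0 ?expR_ge0 ?divr_ge0 ?(ltW alpha_gt0) //.
rewrite [X in X <= _]mulrC ler_wpM2l ?softmax_ge0 //.
by apply: lerXn2r; rewrite // nnegrE subr_ge0 ltW.
Qed.

Let thetaS t a : theta t.+1 a = theta t a + DG_incr eta alpha r (theta t) a.
Proof. by []. Qed.

Let logit_gap_nondecreasing b N :
    (forall t, (N <= t)%N -> 2 * r b - r astar <= J t) ->
  forall t, (N <= t)%N -> theta N astar - theta N b <= theta t astar - theta t b.
Proof.
move=> J_ge; elim=> [|t IH]; first by rewrite leqn0 => /eqP ->.
rewrite leq_eqVlt ltnS => /orP[/eqP -> // | N_le_t].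
apply: le_trans (IH N_le_t) _.
have Ua_ge0 : 0 <= advU r (theta t) astar by rewrite advUE subr_ge0.
have Ub_le : advU r (theta t) b <= advU r (theta t) astar / 2.
  by rewrite !advUE; have := J_ge t N_le_t; lra.
have := DG_incr_le_half eta_gt0 alpha_gt0 Ua_ge0 Ub_le.
by rewrite !thetaS; lra.
Qed.

Let softmax_cvg0_below b :
  L < r astar -> r b <= L -> (fun t => softmax (theta t) b) @ \oo --> 0.
Proof.
move=> L_lt_opt rb_le_L.
have [N _ J_gt] : \forall t \near \oo, 2 * r b - r astar < J t.
  by apply: (cvgr_gt L J_cvg); lra.
have J_ge t : (N <= t)%N -> 2 * r b - r astar <= J t by move/J_gt/ltW.
apply: (squeeze_cvg0 (c := expR (theta N b - theta N astar)))
  (softmax_cvg0_above L_lt_opt).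
exists N => // t /= N_le_t.
rewrite softmax_ge0 (softmax_ratio _ astar) ler_wpM2r ?softmax_ge0 // ler_expR.
by have := logit_gap_nondecreasing J_ge N_le_t; lra.
Qed.

Let lim_eq_opt : L = r astar.
Proof.
apply/eqP; rewrite eq_le lim_le_opt /= leNgt; apply/negP => L_lt_opt.
have all_cvg0 b : (fun t => softmax (theta t) b) @ \oo --> 0.
  by have [/softmax_cvg0_above|/(softmax_cvg0_below L_lt_opt)] := ltP L (r b).
have : (fun t => \sum_b softmax (theta t) b) @ \oo --> \sum_(b < K) (0 : R).
  by apply: cvg_big => [|b _]; [exact: add_continuous | exact: all_cvg0].
rewrite big1 //; under eq_cvg do rewrite (sum_softmax _ astar).
move=> /cvgr_lt/(_ 1 ltr01)[N _ /(_ N (leqnn N))].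
by rewrite ltxx.
Qed.

Lemma softmax_suboptimal_cvg0 b :
  b != astar -> (fun t => softmax (theta t) b) @ \oo --> (0 : R).
Proof.
move=> b_neq; have gap_gt0 : 0 < r astar - r b by rewrite subr_gt0 r_lt_opt.
have gap_cvg0 : (fun t => r astar - J t) @ \oo --> 0.
  by rewrite -(subrr (r astar)); apply: cvgB (cvg_cst _) _; rewrite -lim_eq_opt.
apply: (squeeze_cvg0 (c := (r astar - r b)^-1)) gap_cvg0.
apply: nearW => t; rewrite softmax_ge0 ler_pdivlMl //= mulrC.
exact: softmax_mul_gap_le.
Qed.

Lemma softmax_opt_cvg1 : (fun t => softmax (theta t) astar) @ \oo --> (1 : R).
Proof.
have : (fun t => \sum_(b | b != astar) softmax (theta t) b) @ \oo -->
    \sum_(b | b != astar) (0 : R).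
  by apply: cvg_big => [|b]; [exact: add_continuous | exact: softmax_suboptimal_cvg0].
rewrite big1 // => suboptimal_cvg0.
have -> : (fun t => softmax (theta t) astar) =
    (fun t => 1 - \sum_(b | b != astar) softmax (theta t) b).
  by apply: funext => t; rewrite -(sum_softmax (theta t) astar) (bigD1 astar) //= addrK.
by rewrite -[X in _ --> X]subr0; exact: cvgB (cvg_cst (1 : R)) suboptimal_cvg0.
Qed.

End DG_convergence.

Theorem theorem7 (R : realType) (K : nat) (hK : (2 <= K)%N)
  (r : 'I_K -> R) (hr01 : forall a, 0 <= r a <= 1) (hrinj : injective r)
  (astar : 'I_K) (hopt : forall b, b != astar -> r b < r astar)
  (eta : R) (heta : 0 < eta) (theta0 : 'I_K -> R) :
  exists2 alpha0 : R, 0 < alpha0 &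
    forall alpha : R, 0 < alpha -> alpha <= alpha0 ->
      forall a : 'I_K,
        (fun t : nat => softmax (DG_iter eta alpha r theta0 t) a) @ \oo -->
          (if a == astar then (1 : R) else 0).
Proof.
exists 1 => // alpha alpha_gt0 _ a.
have [->|a_neq] := eqVneq a astar.
  exact: softmax_opt_cvg1.
exact: softmax_suboptimal_cvg0 a_neq.
Qed.
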